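(* For $T\ge1$, let $N(T)$ be the number of distinct orbits $o$ in $\mathbb{Z}^2$ with $\operatorname{length}(o)\le T$, and let $S(T)$ be the sum of their lengths. Then: - $N(T)=\frac1{96}T^2+O(T)$; - $S(T)=\frac1{144}T^3+O(T^2)$; - consequently $S(T)/N(T)=\frac23T+O(1)$.
   Context: Define $\mathcal K_1(x_1,x_2)=(-x_1+x_2,x_2)$ and $\mathcal K_2(x_1,x_2)=(x_1,x_1-x_2)$ on $\mathbb{Z}^2$. The orbit $o(\mathbf{x})$ is the set of points obtained from $\mathbf{x}$ by repeated application of $\mathcal K_1,\mathcal K_2$: $(x_1,x_2)$, $(-x_1+x_2,x_2)$, $(-x_1+x_2,-x_1)$, $(-x_2,-x_1)$, $(-x_2,x_1-x_2)$, $(x_1,x_1-x_2)$. Orbits partition $\mathbb{Z}^2$. The orbit length is the Euclidean length of the closed path through the six points in the listed order: $$\operatorname{length}(o(\mathbf{x}))=2\big(|2x_1-x_2|+|x_1+x_2|+|2x_2-x_1|\big).$$ *)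

From mathcomp Require Import all_boot all_order all_algebra finmap.
From mathcomp Require Import reals.
Set Implicit Arguments. Unset Strict Implicit. Unset Printing Implicit Defensive.
Import Order.TTheory GRing.Theory Num.Theory.
Local Open Scope ring_scope.


Definition pt := (int * int)%type.

Definition K1 (x : pt) : pt := (- x.1 + x.2, x.2).
Definition K2 (x : pt) : pt := (x.1, x.1 - x.2).

(* The orbit of x: the six points listed in the paper, as a finite set
   (so that two orbits are equal iff they have the same elements). *)
Definition orbit_pts (x : pt) : seq pt :=
  let: (x1, x2) := x in
  [:: (x1, x2); (- x1 + x2, x2); (- x1 + x2, - x1); (- x2, - x1);
      (- x2, x1 - x2); (x1, x1 - x2)].

Definition orbit (x : pt) : {fset pt} := [fset p | p in orbit_pts x]%fset.

(* Euclidean length of the closed path through the six points of o(x). *)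
Definition orbit_length (x : pt) : int :=
  let: (x1, x2) := x in
  2 * (`|2 * x1 - x2| + `|x1 + x2| + `|2 * x2 - x1|).

Definition box (K : nat) : seq pt :=
  [seq ((i%:Z - K%:Z), (j%:Z - K%:Z)) | i <- iota 0 (2 * K).+1, j <- iota 0 (2 * K).+1].

(* Every orbit of length <= T lies in box (truncn T) (each coordinate is at
   most T/6 in absolute value), so this enumerates all of them. *)
Definition orbits_upto (R : realType) (T : R) : seq ({fset pt} * int) :=
  undup [seq (orbit x, orbit_length x) |
          x <- box (Num.truncn T) & (orbit_length x)%:~R <= T].

Definition Ncount (R : realType) (T : R) : nat := size (orbits_upto T).

Definition Ssum (R : realType) (T : R) : int :=
  \sum_(o <- orbits_upto T) o.2.

From mathcomp Require Import all_boot all_order all_algebra finmap.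
From mathcomp Require Import reals.
From mathcomp Require Import zify ring lra.
Set Implicit Arguments. Unset Strict Implicit. Unset Printing Implicit Defensive.
Import Order.TTheory GRing.Theory Num.Theory.
Local Open Scope ring_scope.

(* Every orbit meets the chamber y2 <= 2 y1, y1 <= 2 y2 in exactly one point,
   and on the chamber the orbit length is 4 (y1 + y2).  The orbits of length
   at most T thus correspond to the chamber points with y1 + y2 <= k, where
   k = floor(T/4).  The diagonal y1 + y2 = s carries s/3 + O(1) of them,
   so N(T) = k^2/6 + O(k) and S(T) = 4 k^3/9 + O(k^2); as T = 4k + O(1) this
   gives T^2/96 + O(T) and T^3/144 + O(T^2), and the ratio follows. *)

Definition chamber (y : pt) : bool := (y.2 <= 2 * y.1) && (y.1 <= 2 * y.2).

Lemma orbit_K1 x : orbit (K1 x) = orbit x.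
Proof.
apply/fsetP => -[c d]; case: x => a b.
rewrite /orbit /orbit_pts /K1 /= !inE /= !xpair_eqE.
apply/idP/idP; lia.
Qed.

Lemma orbit_K2 x : orbit (K2 x) = orbit x.
Proof.
apply/fsetP => -[c d]; case: x => a b.
rewrite /orbit /orbit_pts /K2 /= !inE /= !xpair_eqE.
apply/idP/idP; lia.
Qed.

Lemma orbit_length_K1 x : orbit_length (K1 x) = orbit_length x.
Proof. by case: x => a b; rewrite /orbit_length /K1 /=; lia. Qed.

Lemma orbit_length_K2 x : orbit_length (K2 x) = orbit_length x.
Proof. by case: x => a b; rewrite /orbit_length /K2 /=; lia. Qed.

Lemma chamber_orbit_rep x : exists2 y, chamber y &
  orbit y = orbit x /\ orbit_length y = orbit_length x.
Proof.
have : chamber x \/ chamber (K1 x) \/ chamber (K2 x) \/ chamber (K2 (K1 x)) \/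
         chamber (K1 (K2 x)) \/ chamber (K1 (K2 (K1 x))).
  by case: x => a b; rewrite /chamber /K1 /K2 /=; lia.
case=> [|[|[|[|[|]]]]] cy;
  [exists x | exists (K1 x) | exists (K2 x) | exists (K2 (K1 x))
  | exists (K1 (K2 x)) | exists (K1 (K2 (K1 x)))];
  by do ?split; rewrite ?(orbit_K1, orbit_K2, orbit_length_K1, orbit_length_K2).
Qed.

Lemma chamber_orbit_inj : {in chamber &, injective orbit}.
Proof.
move=> y y'; rewrite !unfold_in => hy hy' e.
have : y' \in orbit y by rewrite e; case: y' {e hy hy'} => a b; rewrite !inE eqxx.
case: y y' hy hy' {e} => [a b] [c d]; rewrite /chamber /=.
rewrite /orbit /orbit_pts !inE /= !xpair_eqE => h1 h2 h3.
by apply/eqP; rewrite xpair_eqE; lia.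
Qed.

Lemma orbit_length_chamber y : chamber y -> orbit_length y = 4 * (y.1 + y.2).
Proof. by case: y => a b; rewrite /chamber /orbit_length /=; lia. Qed.

(* The chamber points on the diagonal y1 + y2 = s are those with
   ceil(s/3) <= y1 <= floor(2s/3). *)
Definition diag_count (s : nat) : nat := ((2 * s) %/ 3).+1 - (s + 2) %/ 3.

Definition chamber_pts (k : nat) : seq pt :=
  [seq (a%:Z, s%:Z - a%:Z) | s <- iota 0 k.+1, a <- iota ((s + 2) %/ 3) (diag_count s)].

Lemma mem_chamber_pts k y : (y \in chamber_pts k) = chamber y && (y.1 + y.2 <= k%:Z).
Proof.
apply/idP/idP.
- case/allpairsPdep => s [a [hs ha ->]].
  by move: hs ha; rewrite !mem_iota /chamber /diag_count /=; lia.
case: y => a b; rewrite /chamber /= => h.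
pose i := absz a; pose s := absz (a + b).
have -> : (a, b) = (i%:Z, s%:Z - i%:Z) by apply/eqP; rewrite xpair_eqE /i /s; lia.
apply: (allpairs_f_dep (fun s i : nat => (i%:Z, s%:Z - i%:Z)));
  by rewrite mem_iota /diag_count /i /s; lia.
Qed.

Lemma chamber_pts_uniq k : uniq (chamber_pts k).
Proof.
apply: allpairs_uniq_dep => [|s _|]; rewrite ?iota_uniq //.
move=> [s1 a1] [s2 a2] /= _ _ /eqP; rewrite xpair_eqE => /andP[/eqP e1 /eqP e2].
by have [-> ->] : s1 = s2 /\ a1 = a2 by lia.
Qed.

Lemma mem_box K x : (x \in box K) = (`|x.1| <= K%:Z) && (`|x.2| <= K%:Z).
Proof.
apply/idP/idP.
- by case/allpairsP => -[i j] [hi hj ->]; move: hi hj; rewrite !mem_iota /=; lia.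
case: x => a b /= h.
have -> : (a, b) = ((absz (a + K%:Z))%:Z - K%:Z, (absz (b + K%:Z))%:Z - K%:Z)
  by apply/eqP; rewrite xpair_eqE; lia.
by apply: (allpairs_f (fun i j : nat => (i%:Z - K%:Z, j%:Z - K%:Z)));
  rewrite mem_iota; lia.
Qed.

Lemma perm_orbits_upto (R : realType) (T : R) : 0 <= T ->
  perm_eq (orbits_upto T)
    [seq (orbit y, orbit_length y) | y <- chamber_pts (Num.truncn T %/ 4)].
Proof.
move=> T0; set K := Num.truncn T.
have length_le x : ((orbit_length x)%:~R <= T) = (orbit_length x <= K%:Z).
  have /gez0_abs <- : 0 <= orbit_length x by case: x => a b; rewrite /orbit_length; lia.
  by rewrite -pmulrn -truncn_ge_nat // lez_nat.
apply: uniq_perm; first exact: undup_uniq.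
  rewrite map_inj_in_uniq ?chamber_pts_uniq // => y y'.
  rewrite !mem_chamber_pts => /andP[hy _] /andP[hy' _] [e _].
  exact: chamber_orbit_inj.
move=> z; rewrite mem_undup; apply/mapP/mapP.
- case=> x; rewrite mem_filter => /andP[hT _] ->.
  have [y cy [ey ly]] := chamber_orbit_rep x.
  exists y; last by rewrite ey ly.
  rewrite mem_chamber_pts cy /=; move: hT.
  rewrite length_le -ly orbit_length_chamber //.
  by move: cy; rewrite /chamber; lia.
- case=> -[a b]; rewrite mem_chamber_pts => /andP[cy hk] ->.
  exists (a, b) => //; rewrite mem_filter length_le orbit_length_chamber // mem_box.
  by move: cy hk; rewrite /chamber /=; lia.
Qed.

Definition chamber_count (k : nat) : nat := \sum_(0 <= s < k.+1) diag_count s.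

Definition chamber_moment (k : nat) : nat := \sum_(0 <= s < k.+1) s * diag_count s.

Lemma size_chamber_pts k : size (chamber_pts k) = chamber_count k.
Proof.
rewrite size_allpairs_dep sumnE big_map /chamber_count /index_iota subn0.
by apply: eq_bigr => s _; rewrite size_iota.
Qed.

Lemma sum_orbit_length_chamber_pts k :
  \sum_(y <- chamber_pts k) orbit_length y = (4 * chamber_moment k)%N%:Z.
Proof.
rewrite big_allpairs_dep /chamber_moment /index_iota subn0 -natz natrM natr_sum.
rewrite big_distrr /=; apply: eq_big_seq => s _.
rewrite (eq_big_seq (fun=> (4 * s)%:Z)) => [|a]; last first.
  by rewrite mem_iota /diag_count => ha; rewrite /orbit_length /=; lia.
by rewrite big_const_seq count_predT size_iota iter_addr addr0 natz; lia.
Qed.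

Lemma diag_count_bounds s : (s <= 3 * diag_count s + 1 <= s + 4)%N.
Proof. by rewrite /diag_count; lia. Qed.

Lemma chamber_count_gt0 k : (0 < chamber_count k)%N.
Proof. by rewrite /chamber_count big_nat_recl. Qed.

Lemma chamber_count_bounds k :
  (k * k.+1 <= 6 * chamber_count k + 2 * k.+1)%N /\
  (6 * chamber_count k <= k * k.+1 + 6 * k.+1)%N.
Proof.
elim: k => [|k IH]; first by rewrite /chamber_count big_nat1.
rewrite /chamber_count big_nat_recr //= -/(chamber_count k).
by have := diag_count_bounds k.+1; lia.
Qed.

Lemma chamber_moment_bounds k :
  (2 * k ^ 3 <= 18 * chamber_moment k + 2 * k)%N /\
  (18 * chamber_moment k <= 2 * k ^ 3 + 12 * k ^ 2 + 10 * k)%N.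
Proof.
elim: k => [|k IH]; first by rewrite /chamber_moment big_nat1.
rewrite /chamber_moment big_nat_recr //= -/(chamber_moment k).
have /andP[lo hi] := diag_count_bounds k.+1.
have := leq_mul (leqnn k.+1) lo; have := leq_mul (leqnn k.+1) hi.
by nia.
Qed.

Lemma orbits_upto_chamber (R : realType) (T : R) : 0 <= T -> exists k : nat,
  [/\ Ncount T = chamber_count k, Ssum T = (4 * chamber_moment k)%N%:Z,
      4 * k%:R <= T & T < 4 * k%:R + 4].
Proof.
move=> T0; set K := Num.truncn T.
have perm := perm_orbits_upto T0.
have /andP[Klo Khi] := truncn_itv T0; rewrite -/K in Klo Khi.
exists (K %/ 4)%N; split.
- by rewrite /Ncount (perm_size perm) size_map size_chamber_pts.
- by rewrite /Ssum (perm_big _ perm) big_map sum_orbit_length_chamber_pts.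
- have : ((K %/ 4 * 4)%N%:R <= K%:R :> R) by rewrite ler_nat leq_divM.
  by rewrite natrM; lra.
- have : (K.+1%:R <= (K %/ 4 * 4 + 4)%N%:R :> R) by rewrite ler_nat; lia.
  by rewrite natrD natrM; lra.
Qed.

Lemma chamber_estimates (R : realFieldType) (k : nat) (T : R) :
  1 <= T -> 4 * k%:R <= T -> T < 4 * k%:R + 4 ->
  `|(chamber_count k)%:R - T ^+ 2 / 96| <= 2 * T /\
  `|(4 * chamber_moment k)%:R - T ^+ 3 / 144| <= T ^+ 2.
Proof.
move=> T1 lo hi; have x0 : 0 <= k%:R :> R by rewrite ler0n.
have T2lo : 16 * k%:R ^+ 2 <= T ^+ 2 by nra.
have T2hi : T ^+ 2 <= 16 * (k%:R + 1) ^+ 2 by nra.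
have T3lo : 64 * k%:R ^+ 3 <= T ^+ 3 by clear hi T2hi; nra.
have T3hi : T ^+ 3 <= 64 * (k%:R + 1) ^+ 3 by nra.
have [F1 F2] := chamber_count_bounds k; have [G1 G2] := chamber_moment_bounds k.
move: F1 F2 G1 G2; rewrite -!(ler_nat R) !ler_norml => F1 F2 G1 G2.
by split; apply/andP; split; nra.
Qed.

Lemma ratio_estimate (R : realFieldType) (N S T : R) : 1 <= T -> 1 <= N ->
  `|N - T ^+ 2 / 96| <= 2 * T -> `|S - T ^+ 3 / 144| <= T ^+ 2 ->
  `|S / N - 2 / 3 * T| <= 3 * 384 ^+ 2.
Proof.
move=> T1 N1 /ler_normlP[Nlo Nhi] /ler_normlP[Slo Shi].
have N0 : 0 < N by lra.
have TN : T ^+ 2 <= 384 ^+ 2 * N by have [] := lerP T 384; nra.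
(* S - 2/3 T N = (S - T^3/144) - 2/3 T (N - T^2/96) = O(T^2) = O(N). *)
have TNlo : - (2 * T ^+ 2) <= T * (N - T ^+ 2 / 96) by nra.
have TNhi : T * (N - T ^+ 2 / 96) <= 2 * T ^+ 2 by nra.
have -> : S / N - 2 / 3 * T = (S - 2 / 3 * T * N) / N by field; lra.
rewrite normrM normfV (gtr0_norm N0) ler_pdivrMr // ler_norml.
by apply/andP; split; nra.
Qed.

Theorem mainTheorem18 (R : realType) :
  (exists C : R, forall T : R, 1 <= T ->
     `|(Ncount T)%:R - T ^+ 2 / 96| <= C * T) /\
  (exists C : R, forall T : R, 1 <= T ->
     `|(Ssum T)%:~R - T ^+ 3 / 144| <= C * T ^+ 2) /\
  (exists C : R, forall T : R, 1 <= T ->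
     `|(Ssum T)%:~R / (Ncount T)%:R - 2 / 3 * T| <= C).
Proof.
have estimates (T : R) : 1 <= T -> [/\ 1 <= (Ncount T)%:R :> R,
    `|(Ncount T)%:R - T ^+ 2 / 96| <= 2 * T & `|(Ssum T)%:~R - T ^+ 3 / 144| <= T ^+ 2].
  move=> T1; have [k [-> -> lo hi]] := orbits_upto_chamber (le_trans ler01 T1).
  rewrite -pmulrn ler1n chamber_count_gt0.
  by have [] := chamber_estimates T1 lo hi.
split; [|split].
- by exists 2 => T /(estimates T)[].
- by exists 1 => T /(estimates T)[]; rewrite mul1r.
- exists (3 * 384 ^+ 2) => T T1; have [N1 hN hS] := estimates T T1.
  exact: ratio_estimate T1 N1 hN hS.
Qed.
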